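(* Let $n$ be odd. Let $X_1\sim\mathsf{Bernoulli}(p)$ and $X_k=X_{k-1}\oplus U_k$ for $k=2,\dots,n$, where $U_2,\dots,U_n$ are i.i.d. $\mathsf{Bernoulli}(r)$ independent of $X_1$; let $Y_k=X_k\oplus V_k$ for $k=1,\dots,n$, where $V_1,\dots,V_n$ are i.i.d. $\mathsf{Bernoulli}(\alpha)$ independent of $X^n$. Assume $p\in[\frac12,1)$, $\alpha\in(0,\frac12)$, $\bar\alpha\bar p>\alpha p$, and $\frac{r}{\bar r}<\left(\frac{\alpha}{\bar\alpha}\right)^{n-1}$. Let $$\zeta_n(\varepsilon)=\bar r\,\frac{\mathsf{P}_{\mathsf{c}}(X^n|Y^n)-\varepsilon^n}{p(\bar\alpha\bar r)^n-\bar p(\alpha\bar r)^n}.$$ Then there exists $\varepsilon_{\mathsf L}<\mathsf{P}_{\mathsf{c}}^{1/n}(X^n|Y^n)$ such that for every $\varepsilon\in[\varepsilon_{\mathsf L},\mathsf{P}_{\mathsf{c}}^{1/n}(X^n|Y^n)]$, $$1-\zeta_n(\varepsilon)\Pr(Y^n=\mathbf 1)\le\underline{\mathcal{h}}_n^n(\varepsilon)\le1-\zeta_n(\varepsilon)\alpha^n,$$ and the $2^n$-ary Z-channel $\mathsf{Z}_n(\zeta_n(\varepsilon))$ achieves the lower bound on this interval.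
   Context: $\bar a=1-a$; $\oplus$ is addition mod 2; $\mathsf{Bernoulli}(p)$ has $\Pr(\cdot=1)=p$. $\mathsf{P}_{\mathsf{c}}(X^n|Z^n)=\sum_{z^n}\max_{x^n}P_{X^nZ^n}(x^n,z^n)$. For $\varepsilon\in[\mathsf{P}_{\mathsf{c}}^{1/n}(X^n),\mathsf{P}_{\mathsf{c}}^{1/n}(X^n|Y^n)]$, $\underline{\mathcal{h}}_n(\varepsilon)=\sup\{\mathsf{P}_{\mathsf{c}}^{1/n}(Y^n|Z^n): P_{Z^n|Y^n},\ \mathcal{Z}^n=\{0,1\}^n,\ X^n - Y^n - Z^n,\ \mathsf{P}_{\mathsf{c}}^{1/n}(X^n|Z^n)\le\varepsilon\}$. $\mathbf 0=(0,\dots,0)$, $\mathbf 1=(1,\dots,1)$. The $2^n$-ary Z-channel $\mathsf{Z}_n(\gamma)$ on $\{0,1\}^n$ is given by $\mathsf{W}(y|y)=1$ for $y\ne\mathbf 1$, $\mathsf{W}(\mathbf 0|\mathbf 1)=\gamma$, $\mathsf{W}(\mathbf 1|\mathbf 1)=1-\gamma$; ''achieves the lower bound'' means it satisfies $\mathsf{P}_{\mathsf{c}}^{1/n}(X^n|Z^n)\le\varepsilon$ and $\mathsf{P}_{\mathsf{c}}(Y^n|Z^n)=1-\zeta_n(\varepsilon)\Pr(Y^n=\mathbf 1)$. *)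

From HB Require Import structures.
From mathcomp Require Import all_boot all_order all_algebra.
From mathcomp Require Import all_classical all_reals all_analysis.
Set Implicit Arguments. Unset Strict Implicit. Unset Printing Implicit Defensive.
Import Order.TTheory GRing.Theory Num.Theory.
Local Open Scope ring_scope.
Local Open Scope classical_set_scope.

Section Defs.
Variables (R : realType) (n : nat) (p r a : R).

(* binary vectors {0,1}^n; coordinate k (0-based) of x is nth false x k,
   so X_1 is coordinate 0 *)
Definition bvec := n.-tuple bool.

Definition ones : bvec := [tuple of nseq n true].
Definition zeros : bvec := [tuple of nseq n false].

Definition PX (x : bvec) : R :=
  (if nth false x 0 then p else 1 - p) *
  \prod_(1 <= k < n) (if nth false x k != nth false x k.-1 then r else 1 - r).

Definition PYgX (y x : bvec) : R :=
  \prod_(i < n) (if tnth x i != tnth y i then a else 1 - a).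

Definition PXY (x y : bvec) : R := PX x * PYgX y x.

(* a channel P_{Z^n|Y^n} with Z^n taking values in {0,1}^n:  W y z = P(z|y) *)
Definition channel := {ffun bvec -> {ffun bvec -> R}}.
Definition is_channel (W : channel) : Prop :=
  (forall y z, 0 <= W y z) /\ (forall y, \sum_z W y z = 1).

(* joint laws under the Markov chain X^n - Y^n - Z^n *)
Definition PXZ (W : channel) (x z : bvec) : R := \sum_y PXY x y * W y z.
Definition PYZ (W : channel) (y z : bvec) : R := (\sum_x PXY x y) * W y z.

Definition Pc_X : R := \big[Num.max/0]_x PX x.
Definition Pc_XgY : R := \sum_y \big[Num.max/0]_x PXY x y.
Definition Pc_XgZ (W : channel) : R := \sum_z \big[Num.max/0]_x PXZ W x z.
Definition Pc_YgZ (W : channel) : R := \sum_z \big[Num.max/0]_y PYZ W y z.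

Definition root_n (t : R) : R := t `^ (n%:R^-1).

Definition h_low (eps : R) : R :=
  sup [set t | exists W : channel, is_channel W /\
                root_n (Pc_XgZ W) <= eps /\ t = root_n (Pc_YgZ W)].

Definition zeta (eps : R) : R :=
  (1 - r) * (Pc_XgY - eps ^+ n) /
  (p * ((1 - a) * (1 - r)) ^+ n - (1 - p) * (a * (1 - r)) ^+ n).

Definition PrY1 : R := \sum_x PXY x ones.

Definition Zchan (g : R) : channel :=
  [ffun y => [ffun z =>
     if y != ones then (z == y)%:R
     else if z == zeros then g
     else if z == ones then 1 - g else 0]].

End Defs.

Arguments is_channel {R n} W.
Arguments PXZ {R} n p r a W x z.
Arguments PYZ {R} n p r a W y z.
Arguments Pc_XgZ {R} n p r a W.
Arguments Pc_YgZ {R} n p r a W.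

From HB Require Import structures.
From mathcomp Require Import all_boot all_order all_algebra.
From mathcomp Require Import all_classical all_reals all_analysis.
From mathcomp Require Import ring lra.
Import Order.TTheory GRing.Theory Num.Theory.
Local Open Scope ring_scope.

(* Under these hypotheses the memory of the chain dominates the observation
   noise, so the MAP guess of X^n from any y is a constant vector 0...0 or
   1...1, and changing a guess between them changes P(x, y) by at most
   Delta = P(1...1, 1...1) - P(0...0, 1...1) <= (Delta / alpha^n) P_Y(y).

   Converse: for any channel W, guess at z the constant vector that is MAP for
   the most likely y given z.  Compared with P_c(X|Y) this loses only on the
   pairs (y, z) where y is not that most likely value, so
   P_c(X|Y) - P_c(X|Z) <= (Delta / alpha^n) (1 - P_c(Y|Z)).

   Achievability: 0...0 is the strict MAP guess at y = 0...0, so for small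
   gamma the Z-channel sending 1...1 to 0...0 with probability gamma keeps all
   MAP guesses and costs exactly gamma Delta of P_c(X|.) and
   gamma Pr(Y^n = 1...1) of P_c(Y|.); gamma = zeta_n(eps) gives P_c(X|Z) = eps^n. *)

Section FiniteExtrema.
Context {R : realType}.

Lemma bigmax_at {T : finType} {F : T -> R} (t0 : T) :
  0 <= F t0 -> (forall t, F t <= F t0) -> \big[Num.max/0]_t F t = F t0.
Proof.
move=> F0 Ft; apply/le_anti/andP; split; last exact: le_bigmax.
exact: bigmax_le.
Qed.

Lemma sumD2 {T : finType} (F : T -> R) {t0 t1 : T} : t0 != t1 ->
  \sum_t F t = F t0 + F t1 + \sum_(t | (t != t0) && (t != t1)) F t.
Proof.
move=> t01; rewrite (bigD1 t0) //= (bigD1 t1) 1?eq_sym //= addrA.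
by congr (_ + _); apply: eq_bigl => t; rewrite andbC.
Qed.

Lemma strict_argmax_robust {T : finType} (f h : T -> R) t0 :
  (forall t, t != t0 -> f t < f t0) ->
  exists2 d, 0 < d & forall e t, 0 <= e <= d -> f t + e * h t <= f t0 + e * h t0.
Proof.
move=> ft0.
pose q t := (f t0 - f t) / (1 + `|h t - h t0|).
have q_gt0 t : t != t0 -> 0 < q t.
  by move=> tt0; rewrite divr_gt0 ?subr_gt0 ?ft0 // ltr_pwDl.
exists (\big[Num.min/1]_(t | t != t0) q t).
  by apply/bigmin_gtP; split; [exact: ltr01 | exact: q_gt0].
move=> e t /andP[e0 e_le]; have [-> //|tt0] := eqVneq t t0.
have e_q : e <= q t := le_trans e_le (bigmin_le_cond _ (P := fun t => t != t0) q tt0).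
have h_abs : e * (h t - h t0) <= e * `|h t - h t0| by rewrite ler_wpM2l ?ler_norm.
have q_abs : q t * `|h t - h t0| <= f t0 - f t.
  have d_gt0 : 0 < 1 + `|h t - h t0| by rewrite ltr_pwDl.
  by rewrite /q mulrAC ler_pdivrMr // ler_wpM2l ?lerDr // subr_ge0 ltW ?ft0.
have : e * `|h t - h t0| <= q t * `|h t - h t0| by rewrite ler_wpM2r.
lra.
Qed.

End FiniteExtrema.

Section Guessing.
Context {R : realType}.

Definition pc {X Y : finType} (P : X -> Y -> R) : R :=
  \sum_y \big[Num.max/0]_x P x y.

Definition garble {X Y Z : finType} (P : X -> Y -> R) (W : Y -> Z -> R)
  (x : X) (z : Z) : R := \sum_y P x y * W y z.

Definition marginal {X Y : finType} (P : X -> Y -> R) (y : Y) : R :=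
  \sum_x P x y.

Definition stochastic {Y Z : finType} (W : Y -> Z -> R) : Prop :=
  (forall y z, 0 <= W y z) /\ (forall y, \sum_z W y z = 1).

Definition diag_joint {Y : finType} (m : Y -> R) (y' y : Y) : R :=
  (y' == y)%:R * m y.

Definition zchan {Y : finType} (y0 y1 : Y) (gm : R) (y z : Y) : R :=
  if y != y1 then (z == y)%:R
  else if z == y0 then gm else if z == y1 then 1 - gm else 0.

Context {X Y Z : finType}.
Implicit Types (P : X -> Y -> R) (W : Y -> Z -> R) (m : Y -> R).

Lemma pc_ge0 P : 0 <= pc P.
Proof. by apply: sumr_ge0 => y _; apply: bigmax_ge_id. Qed.

Lemma pc_MAP P (g : Y -> X) : (forall x y, 0 <= P x y) ->
  (forall x y, P x y <= P (g y) y) -> pc P = \sum_y P (g y) y.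
Proof. by move=> P0 Pg; apply: eq_bigr => y _; apply: bigmax_at. Qed.

Lemma sum_garble_out m W : stochastic W ->
  \sum_z \sum_y m y * W y z = \sum_y m y.
Proof.
case=> _ W1; rewrite exchange_big /=.
by apply: eq_bigr => y _; rewrite -mulr_sumr W1 mulr1.
Qed.

Lemma garble_diag m W y z : garble (diag_joint m) W y z = m y * W y z.
Proof.
rewrite /garble (bigD1 y) //= big1 ?addr0 => [|y' y'y].
  by rewrite /diag_joint eqxx mul1r.
by rewrite /diag_joint eq_sym (negPf y'y) mul0r mul0r.
Qed.

Lemma pc_diag m : (forall y, 0 <= m y) -> pc (diag_joint m) = \sum_y m y.
Proof.
move=> m0; apply: eq_bigr => y _; rewrite /diag_joint (bigmax_at y) eqxx ?mul1r // => y'.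
by case: eqP; rewrite ?mul1r ?mul0r.
Qed.

Lemma pc_garble_loss_at P W (g : Y -> X) c z :
  (forall x y, 0 <= P x y) -> stochastic W ->
  (forall y y', P (g y) y - P (g y') y <= c * marginal P y) ->
  \sum_y P (g y) y * W y z - \big[Num.max/0]_x garble P W x z <=
  c * (\sum_y marginal P y * W y z - \big[Num.max/0]_y (marginal P y * W y z)).
Proof.
move=> P0 [W0 _] gc.
have m0 y : 0 <= marginal P y * W y z by rewrite mulr_ge0 ?sumr_ge0.
case: (pickP (@predT Y)) => [y0 _|Y0]; last first.
  have noY (op : R -> R -> R) (F : Y -> R) : \big[op/0]_y F y = 0.
    exact: big_pred0.
  rewrite /garble noY noY noY (eq_bigr (fun=> 0)) => [|x _]; last exact: noY.
  by rewrite bigmax_eq_id // subrr mulr0.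
(* Guess at [z] the MAP value for the most likely [y] given [z]: only the
   other values of [y] lose, each at most [c * marginal P y]. *)
have [y' _ ->] := eq_bigmax y0 predT (fun y => marginal P y * W y z) isT (fun y _ => m0 y).
apply: (@le_trans _ _ (\sum_y (P (g y) y - P (g y') y) * W y z)).
  rewrite (eq_bigr _ (fun y _ => mulrBl _ _ _)) sumrB lerB //.
  exact: le_bigmax (fun x => garble P W x z) (g y').
rewrite (bigD1 y') //= subrr mul0r add0r [X in _ <= c * (X - _)](bigD1 y') //=.
rewrite addrC addrK mulr_sumr.
by apply: ler_sum => y _; rewrite mulrA ler_wpM2r.
Qed.

Lemma pc_garble_loss P W (g : Y -> X) c :
  (forall x y, 0 <= P x y) -> stochastic W ->
  (forall x y, P x y <= P (g y) y) ->
  (forall y y', P (g y) y - P (g y') y <= c * marginal P y) ->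
  pc P - pc (garble P W) <=
  c * (\sum_y marginal P y - pc (fun y z => marginal P y * W y z)).
Proof.
move=> P0 W_st Pg gc.
rewrite (pc_MAP _ _ P0 Pg) -(sum_garble_out (fun y => P (g y) y) W W_st).
rewrite -(sum_garble_out (marginal P) W W_st).
rewrite /pc -!sumrB mulr_sumr; apply: ler_sum => z _.
exact: pc_garble_loss_at.
Qed.

End Guessing.

Section ZChannel.
Context {R : realType} {Y : finType}.
Variables (y0 y1 : Y) (gm : R).
Hypotheses (y01 : y0 != y1) (gm01 : 0 <= gm <= 1).

Lemma zchan_stochastic : stochastic (zchan y0 y1 gm).
Proof.
case/andP: gm01 => gm0 gm1; split=> [y z|y]; rewrite /zchan.
  by case: ifP => _; [rewrite ler0n | do 2?case: ifP; rewrite ?subr_ge0].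
have [->|yy1] := eqVneq y y1; last first.
  by rewrite /= (bigD1 y) //= eqxx big1 ?addr0 // => z /negPf ->.
rewrite /= (sumD2 _ y01) eqxx eq_sym (negPf y01) eqxx big1 => [|z /andP[/negPf-> /negPf->] //].
by rewrite addr0 addrC subrK.
Qed.

Lemma garble_zchan {T : finType} (P : T -> Y -> R) x z :
  garble P (zchan y0 y1 gm) x z = P x y1 * zchan y0 y1 gm y1 z + (z != y1)%:R * P x z.
Proof.
rewrite /garble (bigD1 y1) //=; congr (_ + _).
have [->|zy1] := eqVneq z y1.
  by rewrite mul0r; apply: big1 => y y_y1; rewrite /zchan y_y1 eq_sym (negPf y_y1) mulr0.
rewrite mul1r (bigD1 z) //= /zchan zy1 eqxx mulr1 big1 ?addr0 // => y /andP[y_y1 y_z].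
by rewrite y_y1 eq_sym (negPf y_z) mulr0.
Qed.

Lemma pc_garble_zchan {T : finType} (P : T -> Y -> R) x0 x1 :
  (forall x y, 0 <= P x y) ->
  (forall x, P x y0 <= P x0 y0) -> (forall x, P x y1 <= P x1 y1) ->
  (forall x, P x y0 + gm * P x y1 <= P x0 y0 + gm * P x0 y1) ->
  pc (garble P (zchan y0 y1 gm)) = pc P - gm * (P x1 y1 - P x0 y1).
Proof.
case/andP: gm01 => gm0 gm1 P0 max0 max1 max01.
have zchan1 z : zchan y0 y1 gm y1 z =
    if z == y0 then gm else if z == y1 then 1 - gm else 0 by rewrite /zchan eqxx.
have G0 x : garble P (zchan y0 y1 gm) x y0 = P x y0 + gm * P x y1.
  by rewrite garble_zchan zchan1 eqxx y01 mul1r addrC mulrC.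
have G1 x : garble P (zchan y0 y1 gm) x y1 = (1 - gm) * P x y1.
  by rewrite garble_zchan zchan1 eq_sym (negPf y01) eqxx mul0r addr0 mulrC.
rewrite /pc !(sumD2 _ y01) (eq_bigr _ (fun x _ => G0 x)) (eq_bigr _ (fun x _ => G1 x)).
have M0 : \big[Num.max/0]_x (P x y0 + gm * P x y1) = P x0 y0 + gm * P x0 y1.
  by apply: bigmax_at; rewrite ?addr_ge0 ?mulr_ge0.
have M1 : \big[Num.max/0]_x ((1 - gm) * P x y1) = (1 - gm) * P x1 y1.
  by apply: bigmax_at => [|x]; rewrite ?mulr_ge0 ?ler_wpM2l ?subr_ge0.
rewrite M0 M1 (bigmax_at x0) // (bigmax_at x1) //.
have -> : \sum_(z | (z != y0) && (z != y1)) \big[Num.max/0]_x garble P (zchan y0 y1 gm) x z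
    = \sum_(z | (z != y0) && (z != y1)) \big[Num.max/0]_x P x z.
  apply: eq_bigr => z /andP[z_y0 z_y1]; apply: eq_bigr => x _.
  by rewrite garble_zchan zchan1 (negPf z_y0) (negPf z_y1) mulr0 add0r mul1r.
ring.
Qed.

Lemma pc_zchan_out (m : Y -> R) :
  (forall y, 0 <= m y) -> gm * m y1 <= m y0 ->
  pc (fun y z => m y * zchan y0 y1 gm y z) = \sum_y m y - gm * m y1.
Proof.
move=> m0 gm_m.
(* Guessing [Y] from [Z] is guessing [X] from [Z] for the law of [(X, Y) = (Y, Y)]. *)
have -> : (fun y z => m y * zchan y0 y1 gm y z) = garble (diag_joint m) (zchan y0 y1 gm).
  by apply/funext => y; apply/funext => z; rewrite garble_diag.
rewrite (pc_garble_zchan (diag_joint m) y0 y1) ?pc_diag // /diag_joint.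
- by rewrite eqxx (negPf y01) !mul1r mul0r subr0.
- by move=> y' y; rewrite mulr_ge0.
- by move=> y; rewrite eqxx mul1r; case: eqP; rewrite ?mul1r ?mul0r.
- by move=> y; rewrite eqxx mul1r; case: eqP; rewrite ?mul1r ?mul0r.
move=> y; rewrite eqxx (negPf y01) mul0r mulr0 addr0 mul1r.
have [->|yy0] := eqVneq y y0; first by rewrite (negPf y01) mul0r mulr0 addr0 mul1r.
by rewrite mul0r add0r; case: eqP; rewrite ?mul1r ?mul0r ?mulr0.
Qed.

End ZChannel.

Lemma big_tuple_cons {V : Type} {idx : V} (op : Monoid.com_law idx) {T : finType}
    {m : nat} (F : m.+1.-tuple T -> V) :
  \big[op/idx]_t F t = \big[op/idx]_(b : T) \big[op/idx]_(t : m.-tuple T) F [tuple of b :: t].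
Proof.
rewrite pair_big /= (reindex (fun u : T * m.-tuple T => [tuple of u.1 :: u.2])) //=.
exists (fun t : m.+1.-tuple T => (thead t, [tuple of behead t])).
  by case=> b t _; congr pair; apply: val_inj.
by move=> t _; apply: val_inj; case: t => -[].
Qed.

Lemma big_tuple0 {V : Type} {idx : V} (op : Monoid.com_law idx) {T : finType}
    (F : 0.-tuple T -> V) :
  \big[op/idx]_t F t = F [tuple].
Proof. by rewrite (big_pred1 [tuple]) // => t; apply/esym/eqP/tuple0. Qed.

Section ChainSums.
Context {R : realType}.

Lemma PYgX_cons m (a : R) b c (y x : m.-tuple bool) :
  PYgX a [tuple of b :: y] [tuple of c :: x] =
  (if c != b then a else 1 - a) * PYgX a y x.
Proof.
rewrite /PYgX big_ord_recl; congr (_ * _).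
by apply: eq_bigr => i _; rewrite !(tnth_nth false).
Qed.

Lemma sum_PYgX m (a : R) (x : m.-tuple bool) : \sum_y PYgX a y x = 1.
Proof.
elim: m x => [|m IH] x; first by rewrite big_tuple0 /PYgX big_ord0.
have -> : x = [tuple of thead x :: behead x] by apply: val_inj; case: x => -[].
rewrite big_tuple_cons.
under eq_bigr do under eq_bigr do rewrite PYgX_cons.
under eq_bigr do rewrite -mulr_sumr IH mulr1.
by rewrite big_bool; case: (thead x) => /=; ring.
Qed.

Lemma PX_cons m (q r : R) b (x : m.+1.-tuple bool) :
  PX q r [tuple of b :: x] = (if b then q else 1 - q) * PX (if b then 1 - r else r) r x.
Proof.
rewrite /PX /= big_nat_recl //=; congr (_ * _); congr (_ * _).
  by case: b; case: (nth false x 0) => //=; rewrite opprB addrC subrK.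
by apply: eq_big_nat => -[].
Qed.

Lemma sum_PX m (q r : R) : (0 < m)%N -> \sum_(x : m.-tuple bool) PX q r x = 1.
Proof.
case: m => // m _; elim: m q => [|m IH] q.
  by rewrite big_tuple_cons big_bool /= !big_tuple0 /PX /= !big_geq //; ring.
rewrite big_tuple_cons.
under eq_bigr do under eq_bigr do rewrite PX_cons.
under eq_bigr do rewrite -mulr_sumr IH mulr1.
by rewrite big_bool /=; ring.
Qed.

End ChainSums.

Section Roots.
Context {R : realType} {n : nat}.
Hypothesis n_gt0 : (0 < n)%N.

Lemma root_n_ge0 (t : R) : 0 <= root_n n t.
Proof. exact: powR_ge0. Qed.

Lemma exprn_root_n (t : R) : 0 <= t -> root_n n t ^+ n = t.
Proof.
move=> t_ge0; rewrite /root_n -powR_mulrn ?powR_ge0 // -powRrM mulVf ?powRr1 //.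
by rewrite pnatr_eq0 -lt0n.
Qed.

Lemma root_n_exprn (e : R) : 0 <= e -> root_n n (e ^+ n) = e.
Proof.
move=> e_ge0; rewrite /root_n -powR_mulrn // -powRrM mulfV ?powRr1 //.
by rewrite pnatr_eq0 -lt0n.
Qed.

Lemma root_n_le_pow (t e : R) : 0 <= t -> 0 <= e -> (root_n n t <= e) = (t <= e ^+ n).
Proof.
move=> t_ge0 e_ge0.
by rewrite -(ler_pXn2r n_gt0) ?nnegrE ?root_n_ge0 // exprn_root_n.
Qed.

Lemma pow_le_root_n (e t : R) : 0 <= e -> 0 <= t -> (e <= root_n n t) = (e ^+ n <= t).
Proof.
move=> e_ge0 t_ge0.
by rewrite -(ler_pXn2r n_gt0) ?nnegrE ?root_n_ge0 // exprn_root_n.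
Qed.

End Roots.

Lemma h_low_pow_bounds {R : realType} {n : nat} {p r a eps u : R} {W0 : channel R n} :
  (0 < n)%N -> 0 <= eps -> is_channel W0 -> Pc_XgZ n p r a W0 <= eps ^+ n ->
  (forall W, is_channel W -> Pc_XgZ n p r a W <= eps ^+ n -> Pc_YgZ n p r a W <= u) ->
  Pc_YgZ n p r a W0 <= h_low n p r a eps ^+ n <= u.
Proof.
move=> n_gt0 eps_ge0 W0_ch W0_eps Y_le; rewrite /h_low; set E := (X in sup X).
have E_W W : is_channel W -> Pc_XgZ n p r a W <= eps ^+ n -> E (root_n n (Pc_YgZ n p r a W)).
  by move=> W_ch W_eps; exists W; rewrite root_n_le_pow ?pc_ge0.
have u_ge0 : 0 <= u := le_trans (pc_ge0 _) (Y_le _ W0_ch W0_eps).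
have E_ub : ubound E (root_n n u).
  move=> _ [W [W_ch [W_eps ->]]].
  rewrite root_n_le_pow ?root_n_ge0 ?pc_ge0 // exprn_root_n //.
  by apply: Y_le; rewrite // -root_n_le_pow ?pc_ge0.
have lo := ub_le_sup (ex_intro _ _ E_ub) (E_W _ W0_ch W0_eps).
have hi := ge_sup (ex_intro _ _ (E_W _ W0_ch W0_eps)) E_ub.
have sup_ge0 := le_trans (root_n_ge0 _) lo.
by apply/andP; split; [rewrite -root_n_le_pow ?pc_ge0 | rewrite -pow_le_root_n].
Qed.

(* Oddness of [n] is only used through [0 < n]. *)
Set Implicit Arguments.
Record admissible {R : realType} (n : nat) (p r a : R) : Prop := Admissible {
  admissible_odd : odd n;
  admissible_p_ge : 2^-1 <= p;
  admissible_p_lt1 : p < 1;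
  admissible_a_gt0 : 0 < a;
  admissible_a_lt : a < 2^-1;
  admissible_r_ge0 : 0 <= r;
  admissible_r_lt1 : r < 1;
  admissible_zero_MAP : (1 - a) * (1 - p) > a * p;
  admissible_memory : r / (1 - r) < (a / (1 - a)) ^+ n.-1 }.
Unset Implicit Arguments.

Definition constv {n : nat} (b : bool) : bvec n := [tuple of nseq n b].
Definition flat {n : nat} (x : bvec n) : bvec n := constv (nth false x 0).

Definition MAP {R : realType} {n : nat} (p r a : R) (y : bvec n) : bvec n :=
  constv (PXY p r a (zeros n) y <= PXY p r a (ones n) y).

Definition Delta {R : realType} (n : nat) (p r a : R) : R :=
  PXY p r a (ones n) (ones n) - PXY p r a (zeros n) (ones n).

Lemma ZchanE {R : realType} (n : nat) (gm : R) :
  (fun y z => Zchan n gm y z) = zchan (zeros n) (ones n) gm.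
Proof. by apply/funext => y; apply/funext => z; rewrite /Zchan !ffunE. Qed.

Section Model.
Context {R : realType} {n : nat} {p r a : R}.
Hypothesis H : admissible n p r a.

Lemma admissible_n_gt0 : (0 < n)%N.
Proof. by have := admissible_odd H; rewrite lt0n; apply: contraTneq => ->. Qed.

Lemma admissible_r_half : r < 1 - r.
Proof.
have a_gt0 := admissible_a_gt0 H; have a_lt := admissible_a_lt H.
have r_lt1 := admissible_r_lt1 H.
have : (a / (1 - a)) ^+ n.-1 <= 1.
  by rewrite exprn_ile1 // ?divr_ge0 ?ler_pdivrMr ?mul1r; lra.
move: (admissible_memory H) => /lt_le_trans/[apply].
by rewrite ltr_pdivrMr ?mul1r //; lra.
Qed.

Lemma admissible_memory_cross : r * (1 - a) ^+ n.-1 < (1 - r) * a ^+ n.-1.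
Proof.
have a_gt0 := admissible_a_gt0 H; have a_lt := admissible_a_lt H.
have r_lt1 := admissible_r_lt1 H.
have a'_gt0 : 0 < (1 - a) ^+ n.-1 by rewrite exprn_gt0 //; lra.
move: (admissible_memory H); rewrite expr_div_n ltr_pdivrMr ?subr_gt0 //.
by rewrite mulrAC ltr_pdivlMr // [X in _ < X]mulrC.
Qed.

Local Ltac bounds :=
  have := admissible_p_ge H; have := admissible_p_lt1 H;
  have := admissible_a_gt0 H; have := admissible_a_lt H;
  have := admissible_r_ge0 H; have := admissible_r_lt1 H;
  have := admissible_r_half; lra.

Lemma PX_ge0 (x : bvec n) : 0 <= PX p r x.
Proof. by rewrite mulr_ge0 ?prodr_ge0 // => [|k _]; case: ifP; bounds. Qed.

Lemma prod_flip_bounds (P : pred 'I_n) (y x : bvec n) :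
  a ^+ #|P| <= \prod_(i | P i) (if tnth x i != tnth y i then a else 1 - a) <= (1 - a) ^+ #|P|.
Proof.
rewrite -!prodr_const; apply/andP; split; apply: ler_prod => i _;
  by case: ifP => _; rewrite ?lexx ?andbT; try (apply/andP; split); bounds.
Qed.

Lemma PYgX_bounds (y x : bvec n) : a ^+ n <= PYgX a y x <= (1 - a) ^+ n.
Proof. by have := prod_flip_bounds predT y x; rewrite card_ord. Qed.

Lemma PXY_ge0 (x y : bvec n) : 0 <= PXY p r a x y.
Proof.
have /andP[an _] := PYgX_bounds y x.
by apply: mulr_ge0 (PX_ge0 x) (le_trans _ an); apply: exprn_ge0; bounds.
Qed.

Lemma marginal_ge_pow (y : bvec n) : a ^+ n <= marginal (PXY p r a) y.
Proof.
rewrite /marginal -[X in X <= _]mul1r -(sum_PX _ p r admissible_n_gt0) mulr_suml.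
by apply: ler_sum => x _; rewrite ler_wpM2l ?PX_ge0 //; case/andP: (PYgX_bounds y x).
Qed.

Lemma sum_marginal : \sum_(y : bvec n) marginal (PXY p r a) y = 1.
Proof.
rewrite exchange_big /= -(sum_PX _ p r admissible_n_gt0).
by apply: eq_bigr => x _; rewrite -mulr_sumr sum_PYgX mulr1.
Qed.

Lemma nth_constv b k : (k < n)%N -> nth false (constv b : bvec n) k = b.
Proof. by move=> kn; rewrite /= nth_nseq kn. Qed.

Lemma PX_constv b :
  PX p r (constv b : bvec n) = (if b then p else 1 - p) * (1 - r) ^+ n.-1.
Proof.
rewrite /PX nth_constv ?admissible_n_gt0 //; congr (_ * _).
rewrite -subn1 -prodr_const_nat; apply: eq_big_nat => k /andP[_ kn].
by rewrite !nth_constv ?eqxx // (leq_ltn_trans (leq_pred k)).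
Qed.

Lemma PX_constv_gt0 b : 0 < PX p r (constv b : bvec n).
Proof. by rewrite PX_constv mulr_gt0 ?exprn_gt0 //; case: b; bounds. Qed.

Lemma PYgX_diag (y : bvec n) : PYgX a y y = (1 - a) ^+ n.
Proof.
by rewrite /PYgX (eq_bigr (fun=> 1 - a)) ?prodr_const ?card_ord // => i _; rewrite eqxx.
Qed.

Lemma PYgX_constvN b : PYgX a (constv b : bvec n) (constv (~~ b)) = a ^+ n.
Proof.
rewrite /PYgX (eq_bigr (fun=> a)) ?prodr_const ?card_ord // => i _.
by rewrite !tnth_nseq; case: b.
Qed.

Lemma nonflat_jump (x : bvec n) : x != flat x ->
  exists2 k, (0 < k < n)%N & nth false x k != nth false x k.-1.
Proof.
move=> x_nflat; apply: contrapT => no_jump; move/eqP: x_nflat; apply.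
have x_const k : (k < n)%N -> nth false x k = nth false x 0.
  elim: k => // k IH kn; rewrite -IH ?(ltnW kn) //; apply/eqP/negPn/negP => jump.
  by apply: no_jump; exists k.+1.
apply: val_inj; apply: (@eq_from_nth _ false) => [|k]; rewrite !size_tuple // => kn.
by rewrite nth_constv // x_const.
Qed.

Lemma PX_nonflat (x : bvec n) : x != flat x -> (1 - r) * PX p r x <= r * PX p r (flat x).
Proof.
case/nonflat_jump => k /andP[k_gt0 k_lt] jump.
have k_in : k \in index_iota 1 n by rewrite mem_index_iota k_gt0.
rewrite /flat PX_constv /PX (bigD1_seq k) ?iota_uniq // jump.
have -> : (1 - r) ^+ n.-1 = (1 - r) * \prod_(j <- index_iota 1 n | j != k) (1 - r).
  by rewrite -(bigD1_seq k) ?iota_uniq // prodr_const_nat subn1.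
set h := (if _ then p else 1 - p).
set A := \prod_(j <- _ | _) (if _ then r else 1 - r).
set B := \prod_(j <- _ | _) (1 - r).
have h_ge0 : 0 <= h by rewrite /h; case: ifP; bounds.
have A_le : A <= B.
  by apply: ler_prod => j _; case: ifP => _; apply/andP; split; bounds.
have -> : (1 - r) * (h * (r * A)) = (h * r * (1 - r)) * A by ring.
have -> : r * (h * ((1 - r) * B)) = (h * r * (1 - r)) * B by ring.
by rewrite ler_wpM2l // !mulr_ge0 //; bounds.
Qed.

Lemma PYgX_agree (i0 : 'I_n) (y x c : bvec n) : tnth x i0 = tnth c i0 ->
  a ^+ n.-1 * PYgX a y x <= (1 - a) ^+ n.-1 * PYgX a y c.
Proof.
move=> x_c; rewrite /PYgX (bigD1 i0) // [in X in _ <= X](bigD1 i0) // x_c.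
rewrite mulrCA [X in _ <= X]mulrCA.
apply: ler_wpM2l; first by case: ifP; bounds.
have /andP[_ hi] := prod_flip_bounds (predC1 i0) y x.
have /andP[lo _] := prod_flip_bounds (predC1 i0) y c.
rewrite cardC1 card_ord in hi lo.
have an_ge0 : 0 <= a ^+ n.-1 by rewrite exprn_ge0; bounds.
apply: le_trans (ler_wpM2l an_ge0 hi) _.
by rewrite mulrC ler_wpM2l // exprn_ge0 //; bounds.
Qed.

Lemma exprn_pred (u : R) : u ^+ n = u * u ^+ n.-1.
Proof. by rewrite -exprS prednK // admissible_n_gt0. Qed.

Lemma zeros_neq_ones : zeros n != ones n.
Proof.
apply/eqP => /(congr1 (fun t : bvec n => nth false t 0)).
by rewrite !nth_constv ?admissible_n_gt0.
Qed.

Lemma PXY_lt_flat (x y : bvec n) : x != flat x -> PXY p r a x y < PXY p r a (flat x) y.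
Proof.
move=> x_nflat; pose i0 : 'I_n := Ordinal admissible_n_gt0.
have agree : tnth x i0 = tnth (flat x) i0 by rewrite !(tnth_nth false) nth_constv.
have K_gt0 : 0 < (1 - r) * a ^+ n.-1 by rewrite mulr_gt0 ?exprn_gt0 //; bounds.
have PYgX_gt0 : 0 < PYgX a y (flat x).
  have /andP[lo _] := PYgX_bounds y (flat x).
  by apply: lt_le_trans lo; rewrite exprn_gt0 //; bounds.
rewrite -(ltr_pM2l K_gt0).
apply: (@le_lt_trans _ _ (r * (1 - a) ^+ n.-1 * PXY p r a (flat x) y)).
  have -> : (1 - r) * a ^+ n.-1 * PXY p r a x y =
      ((1 - r) * PX p r x) * (a ^+ n.-1 * PYgX a y x) by rewrite /PXY; ring.
  have -> : r * (1 - a) ^+ n.-1 * PXY p r a (flat x) y =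
      (r * PX p r (flat x)) * ((1 - a) ^+ n.-1 * PYgX a y (flat x)) by rewrite /PXY; ring.
  apply: ler_pM (PX_nonflat _ x_nflat) (PYgX_agree _ _ _ _ agree).
    by rewrite mulr_ge0 ?PX_ge0 //; bounds.
  have /andP[lo _] := PYgX_bounds y x.
  by rewrite mulr_ge0 ?exprn_ge0 ?(le_trans _ lo) ?exprn_ge0 //; bounds.
rewrite ltr_pM2r ?admissible_memory_cross //.
by rewrite mulr_gt0 //; apply: PX_constv_gt0.
Qed.

Lemma PXY_le_flat (x y : bvec n) : PXY p r a x y <= PXY p r a (flat x) y.
Proof.
have [<- //|x_nflat] := eqVneq x (flat x).
exact/ltW/PXY_lt_flat.
Qed.

Lemma PX_le_flat (x : bvec n) : PX p r x <= PX p r (flat x).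
Proof.
have [<- //|x_nflat] := eqVneq x (flat x).
have r'_gt0 : 0 < 1 - r by bounds.
rewrite -(ler_pM2l r'_gt0); apply: le_trans (PX_nonflat _ x_nflat) _.
by rewrite ler_wpM2r ?PX_ge0 //; bounds.
Qed.

Lemma PXY_le_MAP (x y : bvec n) : PXY p r a x y <= PXY p r a (MAP p r a y) y.
Proof.
apply: le_trans (PXY_le_flat x y) _; rewrite /flat /MAP.
by case: (nth false x 0); case: (leP (PXY p r a (zeros n) y) (PXY p r a (ones n) y))
  => // /ltW.
Qed.

Lemma DeltaE : Delta n p r a = (1 - r) ^+ n.-1 * (p * (1 - a) ^+ n - (1 - p) * a ^+ n).
Proof.
rewrite /Delta /PXY (PX_constv true) (PX_constv false) !PYgX_diag.
by rewrite (PYgX_constvN true); ring.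
Qed.

Lemma Delta_gt0 : 0 < Delta n p r a.
Proof.
have T_gt0 : 0 < (1 - r) ^+ n.-1 by rewrite exprn_gt0 //; bounds.
rewrite DeltaE mulr_gt0 // subr_gt0.
have an_lt : a ^+ n < (1 - a) ^+ n.
  by rewrite ltr_pXn2r ?admissible_n_gt0 ?nnegrE //; bounds.
apply: (@le_lt_trans _ _ (p * a ^+ n)).
  by rewrite ler_wpM2r ?exprn_ge0 //; bounds.
by rewrite ltr_pM2l //; bounds.
Qed.

Lemma PXY_constv_sub_le b1 b2 (y : bvec n) :
  PXY p r a (constv b1) y - PXY p r a (constv b2) y <= Delta n p r a.
Proof.
rewrite DeltaE /PXY !PX_constv.
set w1 := (if b1 then p else 1 - p); set w2 := (if b2 then p else 1 - p).
have w1_le : 0 <= w1 <= p by rewrite /w1; case: ifP => _; apply/andP; split; bounds.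
have w2_ge : 1 - p <= w2 by rewrite /w2; case: ifP => _; bounds.
have /andP[lo1 hi1] := PYgX_bounds y (constv b1).
have /andP[lo2 hi2] := PYgX_bounds y (constv b2).
have an_ge0 : 0 <= a ^+ n by rewrite exprn_ge0; bounds.
have -> : w1 * (1 - r) ^+ n.-1 * PYgX a y (constv b1) - w2 * (1 - r) ^+ n.-1 * PYgX a y (constv b2)
    = (1 - r) ^+ n.-1 * (w1 * PYgX a y (constv b1) - w2 * PYgX a y (constv b2)) by ring.
apply: ler_wpM2l; first by rewrite exprn_ge0 //; bounds.
case/andP: w1_le => w1_ge0 w1_le; apply: lerB.
  by rewrite ler_pM // (le_trans an_ge0).
by rewrite ler_pM //; bounds.
Qed.

Lemma PXY_ones_lt_zeros : PXY p r a (ones n) (zeros n) < PXY p r a (zeros n) (zeros n).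
Proof.
rewrite /PXY (PX_constv true) (PX_constv false) PYgX_diag (PYgX_constvN false).
rewrite (exprn_pred a) (exprn_pred (1 - a)).
have T_gt0 : 0 < (1 - r) ^+ n.-1 by rewrite exprn_gt0; bounds.
have an_le : a ^+ n.-1 <= (1 - a) ^+ n.-1 by apply: lerXn2r; rewrite ?nnegrE; bounds.
have -> : p * (1 - r) ^+ n.-1 * (a * a ^+ n.-1) =
    (1 - r) ^+ n.-1 * a ^+ n.-1 * (a * p) by ring.
have -> : (1 - p) * (1 - r) ^+ n.-1 * ((1 - a) * (1 - a) ^+ n.-1) =
    (1 - r) ^+ n.-1 * (1 - a) ^+ n.-1 * ((1 - a) * (1 - p)) by ring.
apply: (@le_lt_trans _ _ ((1 - r) ^+ n.-1 * (1 - a) ^+ n.-1 * (a * p))).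
  by apply: ler_wpM2r; [rewrite mulr_ge0 //; bounds | rewrite ler_wpM2l // ltW].
rewrite ltr_pM2l ?mulr_gt0 ?exprn_gt0 //.
  exact: admissible_zero_MAP H.
all: bounds.
Qed.

Lemma PXY_lt_zeros (x : bvec n) :
  x != zeros n -> PXY p r a x (zeros n) < PXY p r a (zeros n) (zeros n).
Proof.
move=> x_nz; have [x_flat|x_nflat] := eqVneq x (flat x).
  move: x_nz; rewrite x_flat /flat.
  by case: (nth false x 0) => [_|]; [exact: PXY_ones_lt_zeros | rewrite eqxx].
apply: lt_le_trans (PXY_lt_flat _ _ x_nflat) _; rewrite /flat.
by case: (nth false x 0) => //; exact/ltW/PXY_ones_lt_zeros.
Qed.

Lemma Pc_XE : Pc_X n p r = PX p r (ones n).
Proof.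
apply: bigmax_at => [|x]; first exact: PX_ge0.
apply: le_trans (PX_le_flat x) _; rewrite /flat PX_constv (PX_constv true).
case: (nth false x 0) => //; apply: ler_wpM2r; first by rewrite exprn_ge0 //; bounds.
by bounds.
Qed.

Lemma Pc_X_lt_Pc_XgY : Pc_X n p r < Pc_XgY n p r a.
Proof.
have -> : Pc_XgY n p r a = \sum_y PXY p r a (MAP p r a y) y :=
  pc_MAP _ _ PXY_ge0 PXY_le_MAP.
have -> : Pc_X n p r = \sum_y PXY p r a (ones n) y.
  by rewrite Pc_XE /PXY -mulr_sumr sum_PYgX mulr1.
rewrite (bigD1 (zeros n)) // [X in _ < X](bigD1 (zeros n)) //.
apply: ltr_leD; first exact: lt_le_trans PXY_ones_lt_zeros (PXY_le_MAP _ _).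
by apply: ler_sum => y _; exact: PXY_le_MAP.
Qed.

Lemma Pc_XgY_loss (W : channel R n) : is_channel W ->
  Pc_XgY n p r a - Pc_XgZ n p r a W <= Delta n p r a / a ^+ n * (1 - Pc_YgZ n p r a W).
Proof.
move=> W_ch.
have := pc_garble_loss (PXY p r a) (fun y z => W y z) (MAP p r a) (Delta n p r a / a ^+ n).
rewrite sum_marginal; apply; [exact: PXY_ge0 | exact: W_ch | exact: PXY_le_MAP | move=> y y'].
apply: le_trans (PXY_constv_sub_le _ _ y) _.
have an_gt0 : 0 < a ^+ n by rewrite exprn_gt0 //; bounds.
rewrite mulrAC ler_pdivlMr //.
by apply: ler_wpM2l; [exact/ltW/Delta_gt0 | exact: marginal_ge_pow].
Qed.

Lemma zeta_Delta eps : zeta n p r a eps * Delta n p r a = Pc_XgY n p r a - eps ^+ n.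
Proof.
have den : p * ((1 - a) * (1 - r)) ^+ n - (1 - p) * (a * (1 - r)) ^+ n =
    (1 - r) * Delta n p r a by rewrite DeltaE !exprMn (exprn_pred (1 - r)); ring.
have r'_neq0 : 1 - r != 0 by rewrite gt_eqF //; bounds.
have D_neq0 : Delta n p r a != 0 by rewrite gt_eqF // Delta_gt0.
by rewrite /zeta den -mulf_div divff // mul1r divfK.
Qed.

Lemma Pc_YgZ_le (W : channel R n) eps : is_channel W -> Pc_XgZ n p r a W <= eps ^+ n ->
  Pc_YgZ n p r a W <= 1 - zeta n p r a eps * a ^+ n.
Proof.
move=> W_ch W_eps.
have an_gt0 : 0 < a ^+ n by rewrite exprn_gt0 //; bounds.
have K_gt0 : 0 < Delta n p r a / a ^+ n by rewrite divr_gt0 ?Delta_gt0.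
suff : zeta n p r a eps * a ^+ n <= 1 - Pc_YgZ n p r a W by lra.
rewrite -(ler_pM2r K_gt0) [X in X <= _](_ : _ = zeta n p r a eps * Delta n p r a).
  rewrite zeta_Delta mulrC; apply: le_trans _ (Pc_XgY_loss _ W_ch).
  exact: lerB (lexx _) W_eps.
by rewrite -mulrA [a ^+ n * _]mulrCA divff ?mulr1 // gt_eqF.
Qed.

Lemma zchan_regime : exists2 g0, 0 < g0 & forall gm, 0 <= gm <= g0 ->
  [/\ is_channel (Zchan n gm),
      Pc_XgZ n p r a (Zchan n gm) = Pc_XgY n p r a - gm * Delta n p r a &
      Pc_YgZ n p r a (Zchan n gm) = 1 - gm * PrY1 n p r a].
Proof.
have [d d_gt0 d_max] := strict_argmax_robust (fun x => PXY p r a x (zeros n))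
  (fun x => PXY p r a x (ones n)) (zeros n) PXY_lt_zeros.
pose m := marginal (@PXY R n p r a).
have m_gt0 y : 0 < m y.
  by apply: lt_le_trans (marginal_ge_pow y); rewrite exprn_gt0 //; bounds.
(* [d] keeps [zeros n] the MAP guess of [X] at [z = zeros n], and the last
   bound keeps it the best guess of [Y] there. *)
exists (Num.min 1 (Num.min d (m (zeros n) / m (ones n)))).
  by rewrite !lt_min ltr01 d_gt0 divr_gt0.
move=> gm /andP[gm_ge0]; rewrite !le_min => /and3P[gm_le1 gm_d gm_m].
have gm01 : 0 <= gm <= 1 by rewrite gm_ge0.
have MAP_ones : MAP p r a (ones n) = ones n.
  by rewrite /MAP ltW // -subr_gt0 Delta_gt0.
split.
- by have := zchan_stochastic _ _ _ zeros_neq_ones gm01; rewrite -ZchanE.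
- transitivity (pc (garble (PXY p r a) (zchan (zeros n) (ones n) gm))).
    by rewrite -ZchanE.
  rewrite (pc_garble_zchan _ _ _ zeros_neq_ones gm01 _ (zeros n) (ones n)) //.
  + exact: PXY_ge0.
  + move=> x; have [-> //|x_nz] := eqVneq x (zeros n).
    exact/ltW/PXY_lt_zeros.
  + by move=> x; rewrite -[X in _ <= PXY _ _ _ X _]MAP_ones PXY_le_MAP.
  + by move=> x; apply: d_max; rewrite gm_ge0.
- transitivity (pc (fun y z => m y * zchan (zeros n) (ones n) gm y z)).
    by rewrite -ZchanE.
  rewrite (pc_zchan_out _ _ _ zeros_neq_ones gm01) ?sum_marginal // => [y|].
    exact/ltW.
  by rewrite -ler_pdivlMr.
Qed.

Lemma zchan_achieves : exists2 g0, 0 < g0 & forall eps,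
  Pc_XgY n p r a - g0 * Delta n p r a <= eps ^+ n <= Pc_XgY n p r a ->
  [/\ is_channel (Zchan n (zeta n p r a eps)),
      Pc_XgZ n p r a (Zchan n (zeta n p r a eps)) = eps ^+ n &
      Pc_YgZ n p r a (Zchan n (zeta n p r a eps)) = 1 - zeta n p r a eps * PrY1 n p r a].
Proof.
have [g0 g0_gt0 regime] := zchan_regime; exists g0 => // eps /andP[lo hi].
have D_gt0 := Delta_gt0; have zD := zeta_Delta eps.
have /regime[Z_ch Z_X Z_Y] : 0 <= zeta n p r a eps <= g0.
  by apply/andP; split; rewrite -(ler_pM2r D_gt0) zD; lra.
by split=> //; rewrite Z_X zD; ring.
Qed.

End Model.

Theorem theorem5 (R : realType) (n : nat) (p r a : R) :
  odd n ->
  2^-1 <= p -> p < 1 ->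
  0 < a -> a < 2^-1 ->
  0 <= r -> r < 1 ->
  (1 - a) * (1 - p) > a * p ->
  r / (1 - r) < (a / (1 - a)) ^+ n.-1 ->
  exists epsL : R,
    root_n n (Pc_X n p r) <= epsL /\
    epsL < root_n n (Pc_XgY n p r a) /\
    forall eps : R, epsL <= eps -> eps <= root_n n (Pc_XgY n p r a) ->
      [/\ 1 - zeta n p r a eps * PrY1 n p r a <= h_low n p r a eps ^+ n,
          h_low n p r a eps ^+ n <= 1 - zeta n p r a eps * a ^+ n,
          is_channel (Zchan n (zeta n p r a eps)),
          root_n n (Pc_XgZ n p r a (Zchan n (zeta n p r a eps))) <= eps &
          Pc_YgZ n p r a (Zchan n (zeta n p r a eps))
            = 1 - zeta n p r a eps * PrY1 n p r a].
Proof.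
move=> *; have H : admissible n p r a by split.
have n_gt0 := admissible_n_gt0 H.
have [g0 g0_gt0 achieves] := zchan_achieves H.
have PcX_ge0 : 0 <= Pc_X n p r by exact: bigmax_ge_id.
pose tau := Num.max (Pc_X n p r) (Pc_XgY n p r a - g0 * Delta n p r a).
have tau_ge0 : 0 <= tau by rewrite le_max PcX_ge0.
have tau_lt : tau < Pc_XgY n p r a.
  by rewrite gt_max Pc_X_lt_Pc_XgY // gtrBl mulr_gt0 ?Delta_gt0.
have Pc_ge0 := le_trans tau_ge0 (ltW tau_lt).
exists (root_n n tau); split.
  by rewrite root_n_le_pow ?root_n_ge0 // exprn_root_n // le_max lexx.
split; first by rewrite ltNge root_n_le_pow ?root_n_ge0 // exprn_root_n // -ltNge.
move=> eps tau_eps eps_Pc; have eps_ge0 := le_trans (root_n_ge0 _) tau_eps.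
rewrite root_n_le_pow // in tau_eps; rewrite pow_le_root_n // in eps_Pc.
have eps_lo : Pc_XgY n p r a - g0 * Delta n p r a <= eps ^+ n.
  by apply: le_trans tau_eps; rewrite le_max lexx orbT.
have /achieves[Z_ch Z_X Z_Y] :
    Pc_XgY n p r a - g0 * Delta n p r a <= eps ^+ n <= Pc_XgY n p r a.
  by rewrite eps_lo eps_Pc.
have Z_le : Pc_XgZ n p r a (Zchan n (zeta n p r a eps)) <= eps ^+ n by rewrite Z_X.
have /andP[h_lo h_hi] := h_low_pow_bounds n_gt0 eps_ge0 Z_ch Z_le (fun W => Pc_YgZ_le H W eps).
by split; rewrite -?Z_Y ?Z_X ?root_n_exprn.
Qed.
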